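(* For any two knots $K$ and $K'$, $$d_{D}(K,K') \leq d_{X}(K,K') \leq 2\,d_{D}(K,K').$$
   Context: A diagonal move (D-move) is a local move on a knot diagram defined as follows. Consider a disk in which the diagram consists of four arcs $a,b,c,d$ arranged in a ''$\#$'' pattern: $a$ and $c$ do not meet each other, $b$ and $d$ do not meet each other, and each of $a,c$ crosses each of $b,d$ exactly once, giving four crossings labelled $1,2,3,4$ in cyclic order around the central square. The pairs $\{1,3\}$ and $\{2,4\}$ are the diagonal crossing pairs. A diagonal move changes the over/under information at both crossings of one diagonal pair and leaves the rest of the diagram unchanged; it is allowed for every choice of orientations of the arcs. For an unknotting operation $O$ and knots $K,K'$, the distance $d_O(K,K')$ is the minimum number of applications of $O$ needed (together with any number of Reidemeister moves) to transform a diagram of $K$ into a diagram of $K'$, the minimum being taken over all diagrams of $K$ and $K'$. Here $d_D$ is this distance for the diagonal move and $d_X$ is this distance for the crossing change. *)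

From Stdlib Require Import Relations.
From mathcomp Require Import all_boot.

Set Implicit Arguments.
Unset Strict Implicit.
Unset Printing Implicit Defensive.

(* A diagram: a finite set of darts (half-edges).  [rot] is the rotation
   (counterclockwise successor of a dart around its crossing), [edg] pairs the
   two darts of an edge, [ovr d] says that the strand of [d] at its crossing
   is the over-strand.  The two darts [d] and [rot (rot d)] are opposite at the
   crossing, i.e. lie on the same strand.  The diagram with no darts is the
   crossingless circle. *)
Record diag := Diag {
  dart : finType;
  rot : dart -> dart;
  edg : dart -> dart;
  ovr : dart -> bool }.

Section DiagDefs.
Variable D : diag.

Definition vtx (d : dart D) : pred (dart D) := fun y =>
  [|| y == d, y == rot d, y == rot (rot d) | y == rot (rot (rot d))].

(* face permutation: faces are the orbits of [fface] *)
Definition fface (d : dart D) : dart D := rot (edg d).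

Definition fstraight (d : dart D) : dart D := edg (rot (rot d)).

(* A valid knot diagram: either the crossingless circle, or a connected
   4-valent map on the sphere (Euler characteristic V - E + F = 2 with
   V = N/4, E = N/2 for N darts, i.e. 4F = N + 8) whose straight-ahead
   curve has exactly one component (two oriented traversals). *)
Definition valid : Prop :=
  #|dart D| = 0 \/
  [/\ [/\ forall d : dart D, rot (rot (rot (rot d))) = d,
          forall d : dart D, rot (rot d) != d,
          forall d : dart D, edg (edg d) = d
        & forall d : dart D, edg d != d],
      [/\ forall d : dart D, ovr (rot (rot d)) = ovr d
        & forall d : dart D, ovr (rot d) = ~~ ovr d],
      forall d e : dart D, connect [rel x y | (y == rot x) || (y == edg x)] d e,
      4 * fcard fface (dart D) = #|dart D| + 8
    & fcard fstraight (dart D) = 2 ].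
End DiagDefs.

(* [del D' S D]: D is obtained from D' by deleting the (rot-closed) set S of
   darts (a union of crossings), each strand passing straight through the
   deleted crossings, and reconnecting the strand ends. *)
Definition del (D' : diag) (S : pred (dart D')) (D : diag) : Prop :=
  exists i : dart D -> dart D',
  [/\ injective i,
      (forall y, S y \/ exists x, i x = y) /\ (forall x, ~~ S (i x)),
      forall x, rot (i x) = i (rot x),
      forall x, ovr (i x) = ovr x
    & forall x, exists k,
        i (edg x) = iter k ((@fstraight D')) (edg (i x)) /\
        forall j, j < k -> S (iter j ((@fstraight D')) (edg (i x)))].

Arguments del : clear implicits.

(* planar isotopy on S^2: isomorphism of diagrams (orientation preserving) *)
Definition iso (D D' : diag) : Prop := del D' (fun _ => false) D.

(* Reidemeister I: delete a crossing carrying a monogon (a kink) *)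
Definition R1 (D' D : diag) : Prop :=
  exists p : dart D', edg p = rot p /\ del D' (vtx p) D.

(* Reidemeister II: delete the two distinct crossings of a bigon face along
   which the same strand is over at both crossings *)
Definition R2 (D' D : diag) : Prop :=
  exists p : dart D',
  [/\ fface (fface p) = p,
      ~~ vtx p (edg p),
      ovr p = ovr (edg p)
    & del D' (fun y => vtx p y || vtx (edg p) y) D].

Definition swap2 (T : eqType) (a b x : T) : T :=
  if x == a then b else if x == b then a else x.

(* Reidemeister III: a triangular face with three distinct crossings, not
   alternating (some strand is over at both of its crossings of the
   triangle); the move reverses the order of the crossings along each of the
   three strands, i.e. each strand exchanges its two external ends. *)
Definition R3 (D D' : diag) : Prop :=
  exists t : dart D,
  let t1 := fface t in let t2 := fface t1 in
  let sw x := swap2 (rot (rot t)) (rot (rot (edg t)))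
             (swap2 (rot (rot t1)) (rot (rot (edg t1)))
             (swap2 (rot (rot t2)) (rot (rot (edg t2))) x)) in
  [/\ fface t2 = t,
      [&& ~~ vtx t t1, ~~ vtx t t2 & ~~ vtx t1 t2],
      [\/ ovr t = ovr (edg t), ovr t1 = ovr (edg t1)
        | ovr t2 = ovr (edg t2)]
    & exists f : dart D -> dart D',
      [/\ bijective f,
          forall x, f (rot x) = rot (f x),
          forall x, ovr (f x) = ovr x
        & forall x, edg (f x) = f (sw (edg (sw x)))]].

Definition rstep (D D' : diag) : Prop :=
  valid D /\ valid D' /\ [\/ iso D D', R1 D D' \/ R1 D' D, R2 D D' \/ R2 D' D | R3 D D' \/ R3 D' D].

Definition req : relation diag := clos_refl_sym_trans diag rstep.

Definition flipped (D D' : diag) (A : pred (dart D)) : Prop :=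
  exists f : dart D -> dart D',
  [/\ bijective f,
      forall x, f (rot x) = rot (f x),
      forall x, f (edg x) = edg (f x)
    & forall x, ovr (f x) = ovr x (+) A x].

Arguments flipped : clear implicits.

Definition Xmove (D D' : diag) : Prop :=
  valid D /\ valid D' /\ exists d : dart D, flipped D D' (vtx d).

(* diagonal move: a square face with four distinct crossings (the # pattern);
   change the crossings at one diagonal pair *)
Definition Dmove (D D' : diag) : Prop :=
  valid D /\ valid D' /\
  exists t : dart D,
  let t1 := fface t in let t2 := fface t1 in let t3 := fface t2 in
  [/\ fface t3 = t,
      [&& ~~ vtx t t1, ~~ vtx t t2, ~~ vtx t t3, ~~ vtx t1 t2, ~~ vtx t1 t3
        & ~~ vtx t2 t3]
    & flipped D D' (fun y => vtx t y || vtx t2 y)].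

Fixpoint reach (M : diag -> diag -> Prop) (k : nat) (D D' : diag) : Prop :=
  match k with
  | 0 => req D D'
  | k'.+1 => exists E E', [/\ req D E, M E E' & reach M k' E' D']
  end.

(* d_M(K, K') <= n, where K, K' are the knots of D, D' *)
Definition dist_le (M : diag -> diag -> Prop) (D D' : diag) (n : nat) : Prop :=
  exists k, k <= n /\ reach M k D D'.

From Stdlib Require Import Relations.
From HB Require Import structures.
From mathcomp Require Import all_boot fingroup perm zify.

Set Implicit Arguments.
Unset Strict Implicit.
Unset Printing Implicit Defensive.

(* A diagonal move is two crossing changes: flip one crossing of the diagonal
   pair, then the other; the intermediate diagram is again valid.
   Conversely, a crossing change at a crossing c is a diagonal move up to
   Reidemeister moves.  A finger move (R2) pushes an edge at c across the next
   edge at c, creating a bigon face between c and a new crossing; two kinks (R1)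
   inserted on one side of this bigon turn it into a square face with four
   distinct crossings, in which c and the first kink are diagonal.  After the
   diagonal move at c and that kink, the kink is still a kink and the finger
   crossings are untouched, so R1, R1 and R2 undo the construction and leave
   the diagram with only c changed.
   That the auxiliary diagrams are valid comes down to counting the cycles of
   their face and straight-ahead permutations: these are the old permutations,
   extended by fixed points on the new darts and multiplied by transpositions
   each of which merges a fixed point into a cycle (or splits a cycle). *)

Section CycleCount.
Local Open Scope group_scope.
Variable T : finType.
Implicit Types (s : {perm T}) (x y z : T).

Lemma porbitE s x y : (y \in porbit s x) = fconnect s x y.
Proof.
apply/porbitP/idP => [[i ->]|/iter_findex <-]; first by rewrite permX fconnect_iter.
by exists (findex s x y); rewrite permX.
Qed.

Lemma fcard_porbits s : fcard s T = #|porbits s|.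
Proof.
have sym : connect_sym (frel s) by move=> x y; apply/fconnect_sym/perm_inj.
have -> : porbits s = porbit s @: [pred x | roots (frel s) x].
  apply/setP => P; apply/imsetP/imsetP => [[x _ ->]|[x _ ->]]; last by exists x.
  exists (root (frel s) x); first by rewrite inE roots_root.
  by apply/setP => z; rewrite !porbitE; apply: same_connect => //; apply: connect_root.
rewrite card_in_imset; first by apply: eq_card => x; rewrite !inE andbT.
move=> x y; rewrite !inE => /eqP rx /eqP ry Pxy.
by rewrite -rx -ry; apply/(rootP sym); rewrite -porbitE Pxy porbit_id.
Qed.

Lemma porbit_fix s y : s y = y -> porbit s y = [set y].
Proof.
move=> sy; apply/setP => z; rewrite inE; apply/porbitP/eqP => [[i ->]|->].
  by elim: i => [|i IH]; rewrite ?expg0 ?perm1 // expgSr permM IH sy.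
by exists 0; rewrite expg0 perm1.
Qed.

Lemma card_porbits_tperm_merge s x y : s y = y -> x != y ->
  #|porbits (tperm x y * s)|.+1 = #|porbits s|.
Proof.
move=> sy xy; have := porbits_mul_tperm s x y.
by rewrite porbit_fix // inE xy /= addn1 addn2 => -[].
Qed.

Lemma card_porbits_tperm_split s x y : x \in porbit s y -> x != y ->
  #|porbits (tperm x y * s)| = #|porbits s|.+1.
Proof.
move=> xs xy; have := porbits_mul_tperm s x y.
by rewrite xs xy /= addn0 addn1.
Qed.

Lemma tpermM_out s x y z : x != z -> y != z -> (tperm x y * s) z = s z.
Proof. by move=> xz yz; rewrite permM tpermD. Qed.

End CycleCount.

Lemma eq_fcard_porbits (T : finType) (f : T -> T) (s : {perm T}) :
  f =1 s -> fcard f T = #|porbits s|.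
Proof. by move=> fs; rewrite (eq_fcard fs) fcard_porbits. Qed.

Section ExtendByFixedPoints.
Variables (T N : finType) (f : T -> T).
Hypothesis f_inj : injective f.

Definition extf (u : T + N) : T + N :=
  if u is inl x then inl (f x) else u.

Lemma extf_inj : injective extf.
Proof. by move=> [x|n] [y|m] //= [E]; rewrite ?(f_inj E) ?E. Qed.

Lemma perm_extf_inr n : perm extf_inj (inr n) = inr n.
Proof. by rewrite permE. Qed.

Lemma card_porbits_extf : #|porbits (perm extf_inj)| = fcard f T + #|N|.
Proof.
set s := perm extf_inj; set p := perm f_inj.
rewrite (eq_fcard_porbits (s := p)); last by move=> x; rewrite permE.
have orbit_inl x : porbit s (inl x) = inl @: porbit p x.
  have iter_inl k : iter k s (inl x) = inl (iter k p x).
    by elim: k => //= k ->; rewrite !permE.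
  apply/setP => u; rewrite porbitE; apply/idP/imsetP.
    move=> /iter_findex <-; move: (findex _ _ _) => k; rewrite iter_inl.
    by exists (iter k p x); rewrite ?porbitE ?fconnect_iter.
  by move=> [y]; rewrite porbitE => /iter_findex <- ->; rewrite -iter_inl fconnect_iter.
have orbit_inr n : porbit s (inr n) = [set inr n] by apply: porbit_fix; rewrite permE.
pose L := [set (@inl T N) @: (P : {set T}) | P in porbits p].
pose R := [set [set (@inr T N n)] | n : N].
have -> : porbits s = L :|: R.
  apply/setP => P; rewrite inE; apply/imsetP/orP.
    case=> [[x|n] _ ->]; first by left; rewrite orbit_inl !imset_f.
    by right; rewrite orbit_inr imset_f.
  case=> [/imsetP[_ /imsetP[x _ ->] ->]|/imsetP[n _ ->]].
    by exists (inl x); rewrite ?orbit_inl.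
  by exists (inr n); rewrite ?orbit_inr.
rewrite cardsU; have -> : L :&: R = set0.
  apply/setP => P; rewrite !inE; apply/andP => -[/imsetP[_ /imsetP[x _ ->] ->]].
  by case/imsetP=> n _ /setP /(_ (inr n)); rewrite inE eqxx => /imsetP[].
have inl_inj : injective (@inl T N) by move=> x y [].
rewrite cards0 subn0 (card_imset _ (imset_inj inl_inj)).
rewrite (@card_imset _ _ (fun n : N => [set inr n])) // => n m.
by move=> /setP /(_ (inr n)); rewrite !inE eqxx => /esym/eqP [].
Qed.

End ExtendByFixedPoints.

Inductive K4 := k0 | k1 | k2 | k3.

Definition K4_succ k := match k with k0 => k1 | k1 => k2 | k2 => k3 | k3 => k0 end.

Definition ord_of_K4 (k : K4) : 'I_4 :=
  match k with
  | k0 => @Ordinal 4 0 isT | k1 => @Ordinal 4 1 isT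
  | k2 => @Ordinal 4 2 isT | k3 => @Ordinal 4 3 isT
  end.
Definition K4_of_ord (i : 'I_4) : K4 :=
  match val i with 0 => k0 | 1 => k1 | 2 => k2 | _ => k3 end.
Lemma ord_of_K4K : cancel ord_of_K4 K4_of_ord. Proof. by case. Qed.
HB.instance Definition _ := Finite.copy K4 (can_type ord_of_K4K).

Lemma card_K4 : #|{: K4}| = 4.
Proof.
have /card_uniqP /= <- : uniq [:: k0; k1; k2; k3] by [].
by apply: eq_card => -[].
Qed.

Lemma inl_eq (T U : eqType) (x y : T) : (@inl T U x == inl y) = (x == y). Proof. by []. Qed.
Lemma inr_eq (T U : eqType) (x y : U) : (@inr T U x == inr y) = (x == y). Proof. by []. Qed.
Lemma inl_inr_eq (T U : eqType) (x : T) (y : U) : (inl x == inr y) = false. Proof. by []. Qed.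
Lemma inr_inl_eq (T U : eqType) (x : T) (y : U) : (inr y == inl x) = false. Proof. by []. Qed.
Definition sum_eqE := (inl_eq, inr_eq, inl_inr_eq, inr_inl_eq).

Lemma homo_connect (T U : finType) (eT : rel T) (eU : rel U) (i : T -> U) :
  (forall x y, eT x y -> connect eU (i x) (i y)) ->
  forall x y, connect eT x y -> connect eU (i x) (i y).
Proof.
move=> H x y /connectP[p]; elim: p x => [|z p IH] x /=; first by move=> _ ->.
by case/andP=> exz pz ly; apply: connect_trans (H _ _ exz) (IH _ pz ly).
Qed.

Definition adj (D : diag) := [rel x y : dart D | (y == rot x) || (y == edg x)].

Definition valid_map (D : diag) : Prop :=
  [/\ [/\ forall d : dart D, rot (rot (rot (rot d))) = d,
          forall d : dart D, rot (rot d) != d,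
          forall d : dart D, edg (edg d) = d
        & forall d : dart D, edg d != d],
      [/\ forall d : dart D, ovr (rot (rot d)) = ovr d
        & forall d : dart D, ovr (rot d) = ~~ ovr d],
      forall d e : dart D, connect (@adj D) d e,
      4 * fcard (@fface D) (dart D) = #|dart D| + 8
    & fcard (@fstraight D) (dart D) = 2 ].

Lemma valid_mapW D : valid_map D -> valid D.
Proof. by right. Qed.

Lemma valid_map_dart D (d : dart D) : valid D -> valid_map D.
Proof. by case=> // /card0_eq /(_ d); rewrite inE. Qed.

Section ValidMap.
Variables (D : diag) (V : valid_map D).

Lemma valid_rot4 (d : dart D) : rot (rot (rot (rot d))) = d.
Proof. by case: V => [[]]. Qed.
Lemma valid_rot2_neq (d : dart D) : rot (rot d) != d.
Proof. by case: V => [[]]. Qed.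
Lemma valid_edgK (d : dart D) : edg (edg d) = d.
Proof. by case: V => [[]]. Qed.
Lemma valid_edg_neq (d : dart D) : edg d != d.
Proof. by case: V => [[]]. Qed.

Lemma valid_rot_neq (d : dart D) : rot d != d.
Proof. by apply/eqP => rd; move: (valid_rot2_neq d); rewrite !rd eqxx. Qed.

End ValidMap.

Section MapBasics.
Variable D : diag.
Hypothesis rot4 : forall d : dart D, rot (rot (rot (rot d))) = d.
Hypothesis edgK : forall d : dart D, edg (edg d) = d.

Lemma rot_inj : injective (@rot D).
Proof. by apply: (can_inj (g := fun x => rot (rot (rot x)))) => x; rewrite rot4. Qed.
Lemma edg_inj : injective (@edg D).
Proof. exact: can_inj edgK. Qed.
Lemma fface_inj : injective (@fface D).
Proof. by move=> x y /rot_inj /edg_inj. Qed.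
Lemma fstraight_inj : injective (@fstraight D).
Proof. by move=> x y /edg_inj /rot_inj /rot_inj. Qed.

Lemma rot2_eq (x y : dart D) : (rot (rot x) == y) = (x == rot (rot y)).
Proof. by apply/eqP/eqP => [<-|->]; rewrite rot4. Qed.
Lemma edg_eq (x y : dart D) : (edg x == y) = (x == edg y).
Proof. by apply/eqP/eqP => [<-|->]; rewrite edgK. Qed.

Lemma vtx_rotr (d x : dart D) : vtx d (rot x) = vtx d x.
Proof.
have rotE y : (rot x == y) = (x == rot (rot (rot y))).
  by apply/eqP/eqP => [<-|->]; rewrite rot4.
rewrite /vtx !rotE !rot4.
by case: (x == d); case: (x == rot d); case: (x == rot (rot d)); case: (x == rot (rot (rot d))).
Qed.

Lemma vtx_rotl (d x : dart D) : vtx (rot d) x = vtx d x.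
Proof.
rewrite /vtx rot4.
by case: (x == d); case: (x == rot d); case: (x == rot (rot d)); case: (x == rot (rot (rot d))).
Qed.

Lemma vtx_refl (d : dart D) : vtx d d.
Proof. by rewrite /vtx eqxx. Qed.

Lemma vtx_eq (d x : dart D) : vtx d x -> vtx x =1 vtx d.
Proof. by move=> dx y; move: dx => /or4P[] /eqP ->; rewrite ?vtx_rotl. Qed.

End MapBasics.

Definition flip (D : diag) (A : pred (dart D)) : diag :=
  @Diag (dart D) (@rot D) (@edg D) (fun x => ovr x (+) A x).
Arguments flip : clear implicits.

Lemma valid_map_flip (D : diag) (A : pred (dart D)) :
  valid_map D -> (forall x, A (rot x) = A x) -> valid_map (flip D A).
Proof.
move=> [R [O1 O2] C F S] HA; split => //; split => d /=; first by rewrite O1 !HA.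
by rewrite O2 HA addNb.
Qed.

Lemma flipped_flip (D : diag) (A : pred (dart D)) : flipped D (flip D A) A.
Proof. by exists id; split => //; exists id. Qed.

Lemma flipped_flipU (D D' : diag) (A B : pred (dart D)) :
  (forall x, ~~ (A x && B x)) -> flipped D D' (fun x => A x || B x) -> flipped (flip D A) D' B.
Proof.
move=> AB [f [f_bij f_rot f_edg f_ovr]]; exists f; split => // x.
by rewrite f_ovr /= -addbA; move: (AB x); case: (A x); case: (B x).
Qed.

Lemma iso_flip_flipped (D D' : diag) (A B : pred (dart D)) :
  A =1 B -> flipped D D' A -> iso (flip D B) D'.
Proof.
move=> AB [f [[g gK fK] f_rot f_edg f_ovr]]; exists f; split.
- exact: can_inj gK.
- by split => // y; right; exists (g y).
- by move=> x; rewrite f_rot.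
- by move=> x; rewrite f_ovr AB.
- by move=> x; exists 0; split => //; rewrite f_edg.
Qed.

Ltac merge_fixed_point := apply: card_porbits_tperm_merge; by rewrite ?tpermM_out ?perm_extf_inr.

(* [lia] is very slow in the presence of the section hypotheses. *)
Ltac lia_goal := repeat match goal with H : _ |- _ => clear H end; lia.

(* A new crossing with darts [k0..k3] on the edge [e -- edg e]: the edges are
   [e -- k0], [k1 -- edg e] and the monogon loop [k2 -- k3]. *)
Section Kink.
Variables (D : diag) (e : dart D).

Definition kink_rot (u : dart D + K4) : dart D + K4 :=
  match u with inl x => inl (rot x) | inr k => inr (K4_succ k) end.

Definition kink_edg (u : dart D + K4) : dart D + K4 :=
  match u with
  | inl x => if x == e then inr k0 else if x == edg e then inr k1 else inl (edg x)
  | inr k0 => inl e | inr k1 => inl (edg e) | inr k2 => inr k3 | inr k3 => inr k2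
  end.

Definition kink_ovr (u : dart D + K4) : bool :=
  match u with inl x => ovr x | inr k => (k == k0) || (k == k2) end.

(* Arbitrary crossing data [o] on the new crossing, so that a flipped kink is
   still recognised as one. *)
Definition kink_with (o : dart D + K4 -> bool) := Diag kink_rot kink_edg o.
Definition kink := kink_with kink_ovr.

Lemma vtx_kink_inl o (y x : dart D) : @vtx (kink_with o) (inl y) (inl x) = vtx y x.
Proof. by rewrite /vtx /= !inl_eq. Qed.

Lemma vtx_kink_inr o k (x : dart D) : @vtx (kink_with o) (inr k) (inl x) = false.
Proof. by []. Qed.

Hypothesis V : valid_map D.
Let rot4 := valid_rot4 V.
Let edgK := valid_edgK V.
Let e_edg : (edg e == e) = false. Proof. exact/negbTE/valid_edg_neq. Qed.
Let e_edg' : (e == edg e) = false. Proof. by rewrite eq_sym e_edg. Qed.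

Lemma kink_faces : fcard (@fface kink) (dart kink) = (fcard (@fface D) (dart D)).+1.
Proof.
pose s0 := perm (@extf_inj _ K4 _ (fface_inj rot4 edgK)).
pose s1 := (tperm (inl e) (inr k1) * s0)%g.
pose s2 := (tperm (inl (edg e)) (inr k2) * s1)%g.
pose s := (tperm (inr k2) (inr k0) * s2)%g.
rewrite (eq_fcard_porbits (s := s)).
  have : #|porbits s0| = fcard (@fface D) (dart D) + 4 by rewrite card_porbits_extf card_K4.
  have : #|porbits s|.+1 = #|porbits s2| by merge_fixed_point.
  have : #|porbits s2|.+1 = #|porbits s1| by merge_fixed_point.
  have : #|porbits s1|.+1 = #|porbits s0| by merge_fixed_point.
  lia_goal.
move=> u; rewrite /s !permM !permE.
case: u => [x|[]] //=; rewrite /fface /= ?tpermD ?permE //=.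
  rewrite !inl_eq; have [->|ne1] := eqVneq x e; first by rewrite e_edg' /= eqxx.
  case: (x =P edg e) => [Ex|ne2]; first by subst x; rewrite /= ?eqxx.
  by rewrite /= ?inl_eq (negbTE ne1).
by rewrite inl_eq e_edg /= edgK.
Qed.

Lemma kink_straight : fcard (@fstraight kink) (dart kink) = fcard (@fstraight D) (dart D).
Proof.
pose xe := rot (rot e); pose xe' := rot (rot (edg e)).
pose s0 := perm (@extf_inj _ K4 _ (fstraight_inj rot4 edgK)).
pose s1 := (tperm (inl xe) (inr k0) * s0)%g.
pose s2 := (tperm (inr k0) (inr k3) * s1)%g.
pose s3 := (tperm (inl xe') (inr k1) * s2)%g.
pose s := (tperm (inr k1) (inr k2) * s3)%g.
have xe_xe' : (xe == xe') = false by rewrite /xe /xe' rot2_eq // rot4 e_edg'.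
rewrite (eq_fcard_porbits (s := s)).
  have : #|porbits s0| = fcard (@fstraight D) (dart D) + 4.
    by rewrite card_porbits_extf card_K4.
  have : #|porbits s|.+1 = #|porbits s3| by merge_fixed_point.
  have : #|porbits s3|.+1 = #|porbits s2| by merge_fixed_point.
  have : #|porbits s2|.+1 = #|porbits s1| by merge_fixed_point.
  have : #|porbits s1|.+1 = #|porbits s0| by merge_fixed_point.
  lia_goal.
move=> u; rewrite /s !permM !permE.
case: u => [x|[]] //=; rewrite /fstraight /= ?tpermD ?permE //=.
- rewrite !inl_eq rot2_eq // -/xe.
  case: (x =P xe') => [Ex|ne2]; first by subst x; rewrite eq_sym xe_xe' /= rot2_eq // /xe' eqxx.
  rewrite /= inl_eq; case: (x =P xe) => [Ex|ne1] //=.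
  by rewrite rot2_eq // -/xe' (introF eqP ne2).
- by rewrite inl_eq eq_sym xe_xe' /xe' /= !rot4 edgK.
- by rewrite /xe !rot4.
Qed.

Ltac kink_adj := apply: connect1; by rewrite /= ?eqxx ?e_edg ?edgK ?eqxx ?orbT.
Ltac kink_via k := apply: (@connect_trans _ _ (@inr (dart D) K4 k)); first kink_adj.

Lemma kink_connect (u v : dart kink) : connect (@adj kink) u v.
Proof.
have [_ _ C _ _] := V.
have lift x y : connect (@adj D) x y -> connect (@adj kink) (inl x) (inl y).
  apply: homo_connect => {}x {}y /orP[/eqP ->|/eqP ->]; first by kink_adj.
  case: (x =P e) => [->|ne1]; first by kink_via k0; kink_via k1; kink_adj.
  case: (x =P edg e) => [->|ne2].
    by kink_via k1; kink_via k2; kink_via k3; kink_via k0; kink_adj.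
  by apply: connect1; rewrite /= (introF eqP ne1) (introF eqP ne2) eqxx orbT.
have from_e w : connect (@adj kink) (inl e) w.
  case: w => [x|k]; first exact/lift/C.
  kink_via k0; case: k => //; first by kink_adj.
    by kink_via k1; kink_adj.
  by kink_via k1; kink_via k2; kink_adj.
have to_e w : connect (@adj kink) w (inl e).
  case: w => [x|k]; first exact/lift/C.
  have h0 : connect (@adj kink) (inr k0) (inl e) by kink_adj.
  have h3 : connect (@adj kink) (inr k3) (inl e) by kink_via k0.
  have h2 : connect (@adj kink) (inr k2) (inl e) by kink_via k3.
  by case: k => //; kink_via k2.
exact: connect_trans (to_e u) (from_e v).
Qed.

Lemma valid_map_kink : valid_map kink.
Proof.
have [[_ rot2N _ edgN] [ovr_rot2 ovr_rot] _ F S] := V.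
split.
- split.
  + by case=> [x|[]] //=; rewrite rot4.
  + by case=> [x|[]] //=; rewrite inl_eq rot2N.
  + case=> [x|[]] /=; rewrite ?eqxx ?e_edg ?eqxx //.
    case: (x =P e) => [->|ne1] //=; case: (x =P edg e) => [->|ne2] //=.
    rewrite (inj_eq (edg_inj edgK)) (introF eqP ne1).
    by rewrite -{1}(edgK e) (inj_eq (edg_inj edgK)) (introF eqP ne2) edgK.
  + case=> [x|[]] //=; case: (x =P e) => [->|ne1] //=; case: (x =P edg e) => [->|ne2] //=.
    by rewrite inl_eq edgN.
- by split; case=> [x|[]] //=; rewrite (ovr_rot2, ovr_rot).
- exact: kink_connect.
- by rewrite kink_faces card_sum card_K4; move: F; lia_goal.
- by rewrite kink_straight S.
Qed.

Lemma R1_kink (o : dart D + K4 -> bool) : (forall x, o (inl x) = ovr x) -> R1 (kink_with o) D.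
Proof.
move=> Ho; exists (inr k2); split => //; exists inl; split => //.
- by move=> x y [].
- by split=> // -[x|k]; [right; exists x|left; case: k].
- move=> x /=; case: (x =P e) => [->|ne1]; first by exists 2; split => // -[|[]].
  case: (x =P edg e) => [->|ne2]; last by exists 0.
  by exists 2; split; [rewrite /= edgK|case=> [|[]]].
Qed.

End Kink.

Ltac rewrite_neqs :=
  repeat match goal with H : (?l == ?r) = false |- context [?l == ?r] => rewrite H end.

Ltac rewrite_tperm_innermost side :=
  match goal with
  | |- context [@fun_of_perm.body _ (@tperm _ ?x ?y) ?z] =>
      lazymatch z with
      | context [@fun_of_perm.body _ (@tperm _ _ _) _] => fail
      | _ => first [ rewrite (tpermL x y) | rewrite (tpermR x y)
                   | rewrite (tpermD (x := x) (y := y) (z := z)); [ | side | side ] ]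
      end
  end.

Ltac case_eq_dart x y :=
  let nxy := fresh "nx" in let nyx := fresh "nx" in let exy := fresh "Ex" in
  case: (x =P y) => [exy|/eqP/negbTE nxy];
    [subst x | have nyx := nxy; rewrite eq_sym in nyx].

Definition N8 := (K4 + K4)%type.

(* The finger move pushes the edge [rot a -- edg (rot a)] across the edge
   [a -- edg a] (distinct edges when [edg a != rot a]), creating the crossings
   [Q] and [R] that bound the bigon face [Q k2, R k1]. *)
Section Finger.
Variables (D : diag) (a : dart D).

Notation Q k := (@inr (dart D) N8 (inl k)).
Notation R k := (@inr (dart D) N8 (inr k)).

Definition finger_rot (u : dart D + N8) : dart D + N8 :=
  match u with
  | inl x => inl (rot x)
  | inr (inl k) => Q (K4_succ k) | inr (inr k) => R (K4_succ k)
  end.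

Definition finger_edg (u : dart D + N8) : dart D + N8 :=
  match u with
  | inl x => if x == a then Q k0 else if x == rot a then Q k3
             else if x == edg a then R k2 else if x == edg (rot a) then R k3 else inl (edg x)
  | inr (inl k0) => inl a | inr (inl k3) => inl (rot a)
  | inr (inl k2) => R k0 | inr (inr k0) => Q k2
  | inr (inl k1) => R k1 | inr (inr k1) => Q k1
  | inr (inr k2) => inl (edg a) | inr (inr k3) => inl (edg (rot a))
  end.

Definition finger_ovr (u : dart D + N8) : bool :=
  match u with inl x => ovr x | inr (inl k) | inr (inr k) => (k == k0) || (k == k2) end.

Definition finger_with (o : dart D + N8 -> bool) := Diag finger_rot finger_edg o.
Definition finger := finger_with finger_ovr.

Lemma vtx_finger_inl o (y x : dart D) : @vtx (finger_with o) (inl y) (inl x) = vtx y x.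
Proof. by rewrite /vtx /= !inl_eq. Qed.

Hypothesis V : valid_map D.
Hypothesis ea_ra : edg a != rot a.

Let rot4 := valid_rot4 V.
Let edgK := valid_edgK V.
Let a_ra : (a == rot a) = false. Proof. by rewrite eq_sym (negbTE (valid_rot_neq V a)). Qed.
Let a_ea : (a == edg a) = false. Proof. by rewrite eq_sym (negbTE (valid_edg_neq V a)). Qed.
Let a_era : (a == edg (rot a)) = false. Proof. by rewrite -edg_eq // (negbTE ea_ra). Qed.
Let ra_ea : (rot a == edg a) = false. Proof. by rewrite eq_sym (negbTE ea_ra). Qed.
Let ra_era : (rot a == edg (rot a)) = false.
Proof. by rewrite eq_sym (negbTE (valid_edg_neq V _)). Qed.
Let ea_era : (edg a == edg (rot a)) = false. Proof. by rewrite (inj_eq (edg_inj edgK)) a_ra. Qed.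
Let ra_a : (rot a == a) = false. Proof. by rewrite eq_sym. Qed.
Let ea_a : (edg a == a) = false. Proof. by rewrite eq_sym. Qed.
Let era_a : (edg (rot a) == a) = false. Proof. by rewrite eq_sym. Qed.
Let ea_ra' : (edg a == rot a) = false. Proof. by rewrite eq_sym. Qed.
Let era_ra : (edg (rot a) == rot a) = false. Proof. by rewrite eq_sym. Qed.
Let era_ea : (edg (rot a) == edg a) = false. Proof. by rewrite eq_sym. Qed.

Ltac intro_neqs :=
  move: a_ra a_ea a_era ra_ea ra_era ea_era ra_a ea_a era_a ea_ra' era_ra era_ea
    => ? ? ? ? ? ? ? ? ? ? ? ?.

Ltac simpl_darts := by do 3 (rewrite ?sum_eqE ?eqxx ?edgK ?rot4 /=; rewrite_neqs).

Ltac simpl_darts_inj :=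
  by do 4 (rewrite ?sum_eqE ?eqxx ?edgK ?rot4 ?(inj_eq (rot_inj rot4))
             ?(inj_eq (edg_inj edgK)) /=; rewrite_neqs).

Lemma finger_faces : fcard (@fface finger) (dart finger) = (fcard (@fface D) (dart D)).+2.
Proof.
pose s0 := perm (@extf_inj _ N8 _ (fface_inj rot4 edgK)).
pose sA := (tperm (inl (rot a)) (inl (edg a)) * s0)%g.
pose s1 := (tperm (inl a) (Q k1) * sA)%g.
pose s2 := (tperm (Q k1) (R k2) * s1)%g.
pose s3 := (tperm (inl (rot a)) (Q k0) * s2)%g.
pose s4 := (tperm (inl (edg a)) (R k3) * s3)%g.
pose s5 := (tperm (inl (edg (rot a))) (R k0) * s4)%g.
pose s6 := (tperm (R k0) (Q k3) * s5)%g.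
pose s := (tperm (Q k2) (R k1) * s6)%g.
rewrite (eq_fcard_porbits (s := s)).
  have : #|porbits s0| = fcard (@fface D) (dart D) + 8.
    by rewrite card_porbits_extf card_sum card_K4.
  have : #|porbits sA| = #|porbits s0|.+1.
    apply: card_porbits_tperm_split; last by rewrite inl_eq ra_ea.
    by apply/porbitP; exists 1; rewrite expg1 permE /= /fface edgK.
  have : #|porbits s|.+1 = #|porbits s6| by merge_fixed_point.
  have : #|porbits s6|.+1 = #|porbits s5| by merge_fixed_point.
  have : #|porbits s5|.+1 = #|porbits s4| by merge_fixed_point.
  have : #|porbits s4|.+1 = #|porbits s3| by merge_fixed_point.
  have : #|porbits s3|.+1 = #|porbits s2| by merge_fixed_point.
  have : #|porbits s2|.+1 = #|porbits s1| by merge_fixed_point.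
  have : #|porbits s1|.+1 = #|porbits sA| by merge_fixed_point.
  lia_goal.
move=> u; rewrite /s !permM; intro_neqs.
case: u => [x|[[]|[]]].
  case_eq_dart x a; last case_eq_dart x (rot a); last case_eq_dart x (edg a);
    last case_eq_dart x (edg (rot a)).
  all: repeat rewrite_tperm_innermost ltac:(simpl_darts).
  all: rewrite /s0 permE /fface /=; simpl_darts.
all: repeat rewrite_tperm_innermost ltac:(simpl_darts).
all: rewrite /s0 permE /fface /=; simpl_darts.
Qed.

Lemma finger_straight : fcard (@fstraight finger) (dart finger) = fcard (@fstraight D) (dart D).
Proof.
pose s0 := perm (@extf_inj _ N8 _ (fstraight_inj rot4 edgK)).
pose s1 := (tperm (inl (rot (rot a))) (Q k0) * s0)%g.
pose s2 := (tperm (Q k0) (R k0) * s1)%g.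
pose s3 := (tperm (inl (rot (rot (rot a)))) (Q k3) * s2)%g.
pose s4 := (tperm (Q k3) (R k1) * s3)%g.
pose s5 := (tperm (inl (rot (rot (edg a)))) (R k2) * s4)%g.
pose s6 := (tperm (R k2) (Q k2) * s5)%g.
pose s7 := (tperm (inl (rot (rot (edg (rot a))))) (R k3) * s6)%g.
pose s := (tperm (R k3) (Q k1) * s7)%g.
rewrite (eq_fcard_porbits (s := s)).
  have : #|porbits s0| = fcard (@fstraight D) (dart D) + 8.
    by rewrite card_porbits_extf card_sum card_K4.
  have : #|porbits s|.+1 = #|porbits s7| by merge_fixed_point.
  have : #|porbits s7|.+1 = #|porbits s6| by merge_fixed_point.
  have : #|porbits s6|.+1 = #|porbits s5| by merge_fixed_point.
  have : #|porbits s5|.+1 = #|porbits s4| by merge_fixed_point.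
  have : #|porbits s4|.+1 = #|porbits s3| by merge_fixed_point.
  have : #|porbits s3|.+1 = #|porbits s2| by merge_fixed_point.
  have : #|porbits s2|.+1 = #|porbits s1| by merge_fixed_point.
  have : #|porbits s1|.+1 = #|porbits s0| by merge_fixed_point.
  lia_goal.
move=> u; rewrite /s !permM; intro_neqs.
case: u => [x|[[]|[]]].
  case_eq_dart x (rot (rot a)); last case_eq_dart x (rot (rot (rot a)));
    last case_eq_dart x (rot (rot (edg a))); last case_eq_dart x (rot (rot (edg (rot a)))).
  all: repeat rewrite_tperm_innermost ltac:(simpl_darts_inj).
  all: rewrite /s0 permE /fstraight /= ?rot2_eq //; simpl_darts_inj.
all: repeat rewrite_tperm_innermost ltac:(simpl_darts_inj).
all: rewrite /s0 permE /fstraight /=; simpl_darts_inj.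
Qed.

Ltac finger_adj := apply: connect1; simpl_darts.

Lemma finger_connect (u v : dart finger) : connect (@adj finger) u v.
Proof.
intro_neqs.
have [_ _ C _ _] := V.
have to_a n : connect (@adj finger) (inr n) (inl a).
  have q0 : connect (@adj finger) (Q k0) (inl a) by finger_adj.
  have q3 : connect (@adj finger) (Q k3) (inl a) by apply: connect_trans q0; finger_adj.
  have q2 : connect (@adj finger) (Q k2) (inl a) by apply: connect_trans q3; finger_adj.
  have r0 : connect (@adj finger) (R k0) (inl a) by apply: connect_trans q2; finger_adj.
  have r3 : connect (@adj finger) (R k3) (inl a) by apply: connect_trans r0; finger_adj.
  have r2 : connect (@adj finger) (R k2) (inl a) by apply: connect_trans r3; finger_adj.
  case: n => -[] //; [apply: connect_trans q2 | apply: connect_trans r2]; finger_adj.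
have from_a n : connect (@adj finger) (inl a) (inr n).
  have q0 : connect (@adj finger) (inl a) (Q k0) by finger_adj.
  have q1 : connect (@adj finger) (inl a) (Q k1) by apply: connect_trans q0 _; finger_adj.
  have q2 : connect (@adj finger) (inl a) (Q k2) by apply: connect_trans q1 _; finger_adj.
  have r0 : connect (@adj finger) (inl a) (R k0) by apply: connect_trans q2 _; finger_adj.
  have r1 : connect (@adj finger) (inl a) (R k1) by apply: connect_trans r0 _; finger_adj.
  have r2 : connect (@adj finger) (inl a) (R k2) by apply: connect_trans r1 _; finger_adj.
  case: n => -[] //; [apply: connect_trans q2 _ | apply: connect_trans r2 _]; finger_adj.
have lift x y : connect (@adj D) x y -> connect (@adj finger) (inl x) (inl y).
  apply: homo_connect => {}x {}y /orP[/eqP ->|/eqP ->]; first by finger_adj.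
  have via n m : @edg finger (inl x) = inr n -> @edg finger (inr m) = inl (edg x) ->
      connect (@adj finger) (inl x) (inl (edg x)).
    move=> xn mx; apply: (@connect_trans _ _ (inr n)).
      by apply/connect1/orP; right; rewrite xn.
    apply: connect_trans (to_a n) (connect_trans (from_a m) _).
    by apply/connect1/orP; right; rewrite mx.
  case_eq_dart x a; last case_eq_dart x (rot a); last case_eq_dart x (edg a);
    last case_eq_dart x (edg (rot a)).
  + by apply: (via (inl k0) (inr k2)); rewrite /= ?eqxx.
  + by apply: (via (inl k3) (inr k3)); simpl_darts.
  + by apply: (via (inr k2) (inl k0)); simpl_darts.
  + by apply: (via (inr k3) (inl k3)); simpl_darts.
  + by apply/connect1/orP; right; simpl_darts.
have from_a' w : connect (@adj finger) (inl a) w.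
  by case: w => [x|n]; [apply/lift/C | apply: from_a].
have to_a' w : connect (@adj finger) w (inl a).
  by case: w => [x|n]; [apply/lift/C | apply: to_a].
exact: connect_trans (to_a' u) (from_a' v).
Qed.

Lemma valid_map_finger : valid_map finger.
Proof.
have [[_ rot2N _ edgN] [ovr_rot2 ovr_rot] _ F S] := V.
intro_neqs; split.
- split.
  + by case=> [x|[[]|[]]] //=; rewrite rot4.
  + by case=> [x|[[]|[]]] //=; rewrite inl_eq rot2N.
  + case=> [x|[[]|[]]]; rewrite /=; try simpl_darts.
    case_eq_dart x a; last case_eq_dart x (rot a); last case_eq_dart x (edg a);
      last case_eq_dart x (edg (rot a)); rewrite /= ?eqxx; try simpl_darts.
    by rewrite ?edg_eq ?edgK //; simpl_darts.
  + case=> [x|[[]|[]]]; rewrite /=; try simpl_darts.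
    case_eq_dart x a; last case_eq_dart x (rot a); last case_eq_dart x (edg a);
      last case_eq_dart x (edg (rot a)); rewrite /= ?eqxx; simpl_darts.
- by split; case=> [x|[[]|[]]] //=; rewrite (ovr_rot2, ovr_rot).
- exact: finger_connect.
- by rewrite finger_faces !card_sum card_K4; move: F; lia_goal.
- by rewrite finger_straight S.
Qed.

Lemma R2_finger (o : dart D + N8 -> bool) :
  (forall x, o (inl x) = ovr x) -> o (Q k2) = o (R k0) -> R2 (finger_with o) D.
Proof.
move=> o_inl o_bigon; intro_neqs.
exists (Q k2); split => //; exists inl; split => //.
- by move=> x y [].
- by split=> // -[x|[[]|[]]]; [right; exists x|left..].
- move=> x.
  case_eq_dart x a; last case_eq_dart x (rot a); last case_eq_dart x (edg a);
    last case_eq_dart x (edg (rot a)).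
  all: try (exists 2; split; first by rewrite /= /fstraight /= ?eqxx; simpl_darts).
  all: try (case=> [|[|j]] // _; rewrite /= /fstraight /vtx /= ?eqxx; simpl_darts).
  by exists 0; split => //=; simpl_darts.
Qed.

End Finger.

Lemma req_step (D1 D2 : diag) : valid_map D1 -> valid_map D2 ->
  [\/ iso D1 D2, R1 D1 D2 \/ R1 D2 D1, R2 D1 D2 \/ R2 D2 D1 | R3 D1 D2 \/ R3 D2 D1] ->
  req D1 D2.
Proof. by move=> V1 V2 h; apply: rst_step; split; [|split]; try apply: valid_mapW. Qed.

Lemma req_R1 (D1 D2 : diag) : valid_map D1 -> valid_map D2 -> R1 D1 D2 -> req D1 D2.
Proof. by move=> V1 V2 r; apply: req_step; [..|apply: Or42; left]. Qed.

Lemma req_R2 (D1 D2 : diag) : valid_map D1 -> valid_map D2 -> R2 D1 D2 -> req D1 D2.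
Proof. by move=> V1 V2 r; apply: req_step; [..|apply: Or43; left]. Qed.

Lemma req_iso (D1 D2 : diag) : valid_map D1 -> valid_map D2 -> iso D1 D2 -> req D1 D2.
Proof. by move=> V1 V2 r; apply: req_step; [..|apply: Or41]. Qed.

(* [G3] is [E] after a finger move at [a] and two kinks on the side
   [Q k0 -- a] of the bigon between the crossing of [a] and [Q]; its square
   face [sq0, sq1, sq2, sq3] has corners at the crossing of [a], at [Q], and at
   the two kinks.  [G2f], [G1f], [Ef] are [G3f] with the kinks and the finger
   removed one at a time. *)
Section Gadget.
Variables (E : diag) (a : dart E).
Hypothesis V : valid_map E.
Hypothesis ea_ra : edg a != rot a.

Definition G1 := finger a.
Definition G2 := kink (inr (inl k0) : dart G1).
Definition G3 := kink (inr k1 : dart G2).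

Definition sq0 : dart G3 := inl (inl (inl (rot a))).
Definition sq1 : dart G3 := inl (inl (inr (inl k0))).
Definition sq2 : dart G3 := inl (inr k1).
Definition sq3 : dart G3 := inr k1.

Definition G3f := flip G3 (fun y => vtx sq0 y || vtx sq2 y).
Definition G2f :=
  flip G2 (fun y => vtx (inl (inl (rot a)) : dart G2) y || vtx (inr k1 : dart G2) y).
Definition G1f := flip G1 (vtx (inl (rot a) : dart G1)).
Definition Ef := flip E (vtx (rot a)).

Let V1 : valid_map G1 := valid_map_finger V ea_ra.
Let V2 : valid_map G2 := valid_map_kink _ V1.
Let V3 : valid_map G3 := valid_map_kink _ V2.
Let V3f : valid_map G3f.
Proof. by apply: valid_map_flip V3 _ => x; rewrite !(vtx_rotr (valid_rot4 V3)). Qed.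
Let V2f : valid_map G2f.
Proof. by apply: valid_map_flip V2 _ => x; rewrite !(vtx_rotr (valid_rot4 V2)). Qed.
Let V1f : valid_map G1f.
Proof. by apply: valid_map_flip V1 _ => x; rewrite !(vtx_rotr (valid_rot4 V1)). Qed.
Let Vf : valid_map Ef.
Proof. by apply: valid_map_flip V _ => x; rewrite !(vtx_rotr (valid_rot4 V)). Qed.

Lemma Dmove_G3 : Dmove G3 G3f.
Proof.
have ra_a : (rot a == a) = false by apply/negbTE/valid_rot_neq.
have a_ra : (a == rot a) = false by rewrite eq_sym.
have sq_face : [/\ fface sq0 = sq1, fface sq1 = sq2, fface sq2 = sq3 & fface sq3 = sq0].
  by split; rewrite /fface /=; do 8 (rewrite ?sum_eqE ?eqxx /=; rewrite_neqs).
have [f0 f1 f2 f3] := sq_face.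
split; first exact: valid_mapW V3.
split; first exact: valid_mapW V3f.
exists sq0; cbv zeta; rewrite f0 f1 f2 f3.
by split => //; apply: flipped_flip.
Qed.

Lemma req_G3 : req E G3.
Proof.
have r1 : R2 G1 E := R2_finger V ea_ra (o := @finger_ovr E) (fun _ => erefl) erefl.
have r2 : R1 G2 G1 := R1_kink _ V1 (o := @kink_ovr G1) (fun _ => erefl).
have r3 : R1 G3 G2 := R1_kink _ V2 (o := @kink_ovr G2) (fun _ => erefl).
apply: rst_trans (rst_sym _ _ _ _ (req_R2 V1 V r1)) _.
exact: rst_trans (rst_sym _ _ _ _ (req_R1 V2 V1 r2)) (rst_sym _ _ _ _ (req_R1 V3 V2 r3)).
Qed.

Lemma req_G3f_Ef : req G3f Ef.
Proof.
have r1 : R1 G3f G2f.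
  apply: (R1_kink (D := G2f) (inr k1) V2f (o := @ovr G3f)) => x.
  by rewrite /= !vtx_kink_inl.
have r2 : R1 G2f G1f.
  apply: (R1_kink (D := G1f) (inr (inl k0)) V1f (o := @ovr G2f)) => x.
  by rewrite /= !vtx_kink_inl vtx_kink_inr orbF.
have r3 : R2 G1f Ef.
  apply: (R2_finger (D := Ef) Vf ea_ra (o := @ovr G1f)) => [x|//].
  by rewrite /= vtx_finger_inl.
apply: rst_trans (req_R1 V3f V2f r1) _; apply: rst_trans (req_R1 V2f V1f r2) _.
exact: req_R2 V1f Vf r3.
Qed.

Lemma req_G3f (E' : diag) (d : dart E) :
  vtx d a -> flipped E E' (vtx d) -> valid E' -> req G3f E'.
Proof.
move=> da flip_d vE'; apply: rst_trans req_G3f_Ef (req_iso Vf _ _).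
  by case: flip_d => f _; apply: valid_map_dart (f d) vE'.
apply: iso_flip_flipped flip_d => x.
by rewrite (vtx_rotl (valid_rot4 V)) (vtx_eq (valid_rot4 V) da).
Qed.

End Gadget.

Lemma exists_vtx_edg_neq_rot (D : diag) (d : dart D) :
  valid_map D -> exists2 a, vtx d a & edg a != rot a.
Proof.
move=> V; have [ed_rd|] := eqVneq (edg d) (rot d); last by exists d; rewrite ?vtx_refl.
exists (rot d); first by rewrite /vtx eqxx orbT.
have -> : edg (rot d) = d by rewrite -ed_rd valid_edgK.
by rewrite eq_sym valid_rot2_neq.
Qed.

Lemma Xmove_Dmove (D D' : diag) :
  Xmove D D' -> exists F F', [/\ req D F, Dmove F F' & req F' D'].
Proof.
case=> vD [vD' [d flip_d]].
have V := valid_map_dart d vD.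
have [a da ea_ra] := exists_vtx_edg_neq_rot d V.
exists (G3 a), (G3f a); split; [exact: req_G3 | exact: Dmove_G3 |].
exact: req_G3f da flip_d vD'.
Qed.

Lemma Dmove_Xmove (D D' : diag) : Dmove D D' -> exists M, Xmove D M /\ Xmove M D'.
Proof.
case=> vD [vD' [t [_ distinct flip_diag]]].
have V := valid_map_dart t vD.
have rot4 := valid_rot4 V.
have VM : valid_map (flip D (vtx t)).
  by apply: valid_map_flip V _ => x; rewrite vtx_rotr.
exists (flip D (vtx t)); split.
  by split => //; split; [exact: valid_mapW | exists t; apply: flipped_flip].
split; first exact: valid_mapW.
split => //; exists (fface (fface t)); apply: flipped_flipU flip_diag => x.
apply/andP=> -[tx t2x]; move: distinct; case/and5P=> _ /negP[].
by rewrite -(vtx_eq rot4 tx) (vtx_eq rot4 t2x) vtx_refl.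
Qed.

Lemma reach_req M k (D1 D2 D3 : diag) : req D1 D2 -> reach M k D2 D3 -> reach M k D1 D3.
Proof.
case: k => [|k] /= r12; first exact: rst_trans.
by case=> [E [E' [r2E m r]]]; exists E, E'; split => //; apply: rst_trans r12 r2E.
Qed.

Lemma reach_Xmove_Dmove k (D D' : diag) : reach Xmove k D D' -> reach Dmove k D D'.
Proof.
elim: k D => [|k IH] D //= [E [E' [r x rE']]].
have [F [F' [rF m rF']]] := Xmove_Dmove x.
exists F, F'; split; [exact: rst_trans r rF | exact: m | exact: reach_req rF' (IH _ rE')].
Qed.

Lemma reach_Dmove_Xmove k (D D' : diag) : reach Dmove k D D' -> reach Xmove (2 * k) D D'.
Proof.
elim: k D => [|k IH] D //; rewrite mulnS add2n => -[E [E' [r m rE']]].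
have [M [x1 x2]] := Dmove_Xmove m.
by exists E, M; split => //; exists M, E'; split; [exact: rst_refl | exact: x2 | exact: IH].
Qed.

Theorem mainTheorem6 (D D' : diag) (HD : valid D) (HD' : valid D') :
  forall n : nat,
    (dist_le Xmove D D' n -> dist_le Dmove D D' n) /\
    (dist_le Dmove D D' n -> dist_le Xmove D D' (2 * n)).
Proof.
move=> n; split=> -[k [le_kn r]].
  by exists k; split => //; apply: reach_Xmove_Dmove.
by exists (2 * k); split; [rewrite leq_mul2l le_kn orbT | apply: reach_Dmove_Xmove].
Qed.
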